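(* Every subset $X\subseteq\mathbb{Z}_6^2$ with $|X|=13$ contains a subset $S$ with $|S|=6$ and $\sum_{s\in S}s=(0,0)$. Consequently (since the $12$-element set $\{0,1\}\times\mathbb{Z}_6$ contains no such $6$-element zero-sum subset) $g(\mathbb{Z}_6^2)=13$.
   Context: For a finite abelian group $G$, $g(G)$ is the smallest positive integer $t$ such that every subset $X\subseteq G$ with $|X|\ge t$ contains a subset $S$ with $|S|=\exp(G)$ and $\sum_{s\in S}s=0_G$. Here $\exp(\mathbb{Z}_6^2)=6$. *)

From HB Require Import structures.
From mathcomp Require Import all_boot all_order all_algebra.
Set Implicit Arguments. Unset Strict Implicit. Unset Printing Implicit Defensive.
Import GRing.Theory.
Local Open Scope ring_scope.

Notation Z6sq := ('Z_6 * 'Z_6)%type.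

Definition expZ6sq : nat := 6.

Definition has_zs6 (X : {set Z6sq}) : Prop :=
  exists S : {set Z6sq}, S \subset X /\ #|S| = expZ6sq /\ \sum_(s in S) s = 0.

Definition g_prop (t : nat) : Prop :=
  forall X : {set Z6sq}, (t <= #|X|)%N -> has_zs6 X.

Definition g_is (t : nat) : Prop :=
  (0 < t)%N /\ g_prop t /\ forall u : nat, (0 < u)%N -> g_prop u -> (t <= u)%N.

From mathcomp Require Import all_boot all_order all_algebra.
Set Implicit Arguments. Unset Strict Implicit. Unset Printing Implicit Defensive.
Import GRing.Theory.
Local Open Scope ring_scope.

(* Having a 6-element zero-sum subset is invariant under
   translation (6 x = 0 in Z_6^2), so it suffices to show that a zero-sum-free
   X with 0 \in X has at most 12 elements.  This is checked by an exhaustive,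
   certified backtracking search: the candidates 0 = w_0 < w_1 < ... are added
   in enumeration order, and a candidate w is discarded as soon as w completes
   some 5 already chosen elements to a zero sum.  For the chosen sequence Y we
   maintain the "completer table": its k-th layer is the set of all -(sum T)
   for k-element subsequences T of Y, stored as a 6x6 bitmap.

   The 12-element strip {0,1} x Z_6 has no 6-element zero-sum
   subset; this is read off the 6-th layer of its completer table, again by
   evaluation, using the completeness of the table. *)

(* The 6 coordinates of Z_6, as natural numbers; rotating this list by a
   realizes the translation by a. *)
Definition coords : seq nat := iota 0 6.

Lemma nth_rot_coords (a b : 'Z_6) : nth 0%N (rot a coords) b = (b + a)%R :> nat.
Proof. by case: a b => [[|[|[|[|[|[|a]]]]]] Ha] [[|[|[|[|[|[|b]]]]]] Hb]. Qed.

(* A subset of Z_6^2 stored as a bitmap: row i, column j holds the bit of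
   (i, j); missing rows and columns are read as false. *)
Definition bitmap := seq (seq bool).

Definition bit (b : bitmap) (y : Z6sq) : bool :=
  nth false (nth [::] b (y.1 : nat)) (y.2 : nat).

Definition empty_bm : bitmap := [::].

Definition zero_bm : bitmap := [:: [:: true]].

Fixpoint or_row (r s : seq bool) : seq bool :=
  match r, s with
  | a :: r', b :: s' => (a || b) :: or_row r' s'
  | [::], _ => s
  | _, [::] => r
  end.

Fixpoint or_bm (a b : bitmap) : bitmap :=
  match a, b with
  | r :: a', s :: b' => or_row r s :: or_bm a' b'
  | [::], _ => b
  | _, [::] => a
  end.

Definition translate_bm (b : bitmap) (x : Z6sq) : bitmap :=
  [seq [seq nth false r j | j <- rot (x.2 : nat) coords]
     | r <- [seq nth [::] b i | i <- rot (x.1 : nat) coords]].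

Lemma bit_empty y : bit empty_bm y = false.
Proof. by rewrite /bit !nth_nil. Qed.

Lemma bit_zero y : bit zero_bm y = (y == 0).
Proof. by case: y => [[[|[|[|[|[|[|a]]]]]] Ha] [[|[|[|[|[|[|b]]]]]] Hb]]. Qed.

Lemma nth_or_row r s j : nth false (or_row r s) j = nth false r j || nth false s j.
Proof. by elim: r s j => [|a r IH] [|b s] [|j] //=; rewrite ?orbF. Qed.

Lemma bit_or a b y : bit (or_bm a b) y = bit a y || bit b y.
Proof.
suff nth_or i : nth [::] (or_bm a b) i = or_row (nth [::] a i) (nth [::] b i).
  by rewrite /bit nth_or nth_or_row.
have or_row0 r : or_row r [::] = r by case: r.
by elim: a b i => [|r a IH] [|s b] [|i] //=; rewrite ?nth_nil ?or_row0.
Qed.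

Lemma bit_translate b x y : bit (translate_bm b x) y = bit b (y + x).
Proof.
rewrite /bit /translate_bm.
rewrite (nth_map [::]) ?size_map ?size_rot ?size_iota ?ltn_ord //.
rewrite !(nth_map 0%N) ?size_map ?size_rot ?size_iota ?ltn_ord //.
by rewrite !nth_rot_coords.
Qed.

(* Completer tables.  Layer k + 1 of the table of x :: Y is layer k + 1 of
   the table of Y together with layer k of that table translated by -x. *)
Fixpoint add_layers (prev : bitmap) (t : seq bitmap) (x : Z6sq) : seq bitmap :=
  if t is a :: t' then or_bm a (translate_bm prev x) :: add_layers a t' x
  else [::].

Definition add_elem (t : seq bitmap) (x : Z6sq) : seq bitmap :=
  if t is a :: t' then a :: add_layers a t' x else [::].

Fixpoint completers (n : nat) (Y : seq Z6sq) : seq bitmap :=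
  if Y is x :: Y' then add_elem (completers n Y') x else zero_bm :: nseq n empty_bm.

Lemma size_completers n Y : size (completers n Y) = n.+1.
Proof.
elim: Y => [|x Y IH] /=; first by rewrite size_nseq.
case: (completers n Y) IH => [|a t] //= [<-]; congr S.
by elim: t a => [|b t IHt] a //=; rewrite IHt.
Qed.

Lemma nth_add_elem t x k : nth empty_bm (add_elem t x) k =
  if k is k'.+1 then
    (if (k < size t)%N then or_bm (nth empty_bm t k) (translate_bm (nth empty_bm t k') x)
     else empty_bm)
  else nth empty_bm t 0.
Proof.
case: t => [|a t]; first by case: k.
case: k => [|k] //=.
by elim: t a k => [|b t IH] a [|k] //=; rewrite IH.
Qed.

Lemma completers_sound n Y k y : bit (nth empty_bm (completers n Y) k) y ->
  exists T, [/\ subseq T Y, size T = k & \sum_(t <- T) t = - y].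
Proof.
elim: Y k y => [|x Y IH] k y /=.
  case: k => [|k] /=; last by rewrite nth_nseq; case: ifP; rewrite bit_empty.
  by rewrite bit_zero => /eqP ->; exists [::]; rewrite big_nil oppr0.
have subY T : subseq T Y -> subseq T (x :: Y).
  by move=> sT; apply: subseq_trans sT (subseq_cons _ _).
rewrite nth_add_elem; case: k => [|k].
  by move=> /IH [T [sT szT sumT]]; exists T; split => //; apply: subY.
case: ifP => _; last by rewrite bit_empty.
rewrite bit_or bit_translate => /orP [/IH|/IH] [T [sT szT sumT]].
  by exists T; split => //; apply: subY.
exists (x :: T); split; rewrite /= ?eqxx ?szT //.
by rewrite big_cons sumT opprD addrCA subrr addr0.
Qed.

Lemma completers_complete n Y T : subseq T Y -> (size T <= n)%N ->
  bit (nth empty_bm (completers n Y) (size T)) (- \sum_(t <- T) t).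
Proof.
elim: Y T => [|x Y IH] T.
  by rewrite subseq0 => /eqP -> _; rewrite big_nil oppr0 /= bit_zero.
move=> /= sT szT; rewrite nth_add_elem.
case: T sT szT => [|t T] sT szT; first exact: (IH [::] (sub0seq _)).
rewrite size_completers ltnS szT /= bit_or.
move: sT; case: eqP => [-> sT|_ sT]; last by rewrite (IH (t :: T)).
rewrite bit_translate big_cons opprD addrAC addNr add0r.
by rewrite IH ?orbT // ltnW.
Qed.

(* Backtracking over a candidate list C: [all_branches branch r C] checks
   [branch w C'] for every split C = _ ++ w :: C' such that w :: C' still has
   at least r elements (a shorter tail cannot supply r more choices).  The
   conditionals, rather than && and ||, make evaluation short-circuit. *)
Fixpoint all_branches (T : Type) (branch : T -> seq T -> bool) (r : nat)
    (C : seq T) : bool :=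
  if C is w :: C' then
    if (size C < r)%N then true
    else if branch w C' then all_branches branch r C' else false
  else true.

Lemma all_branchesP (T : eqType) (branch : T -> seq T -> bool) r C W :
  all_branches branch r C -> subseq W C -> (0 < r <= size W)%N ->
  exists w C' W', [/\ W = w :: W', branch w C' & subseq W' C'].
Proof.
move=> + + /andP [r_gt0 rW].
case: W rW => [|w W] rW; first by rewrite leqNgt r_gt0 in rW.
elim: C => [|c C IH]; first by [].
rewrite [all_branches _ _ (_ :: _)]/=; case: ifP => [smallC _ sWC|_].
  by have := leq_trans rW (size_subseq sWC); rewrite leqNgt smallC.
case branch_c: (branch c C) => // allC /=.
case: eqP => [-> sWC|_ sWC]; first by exists c, C, W.
exact: IH.
Qed.

Definition has_zs6b (X : {set Z6sq}) : bool :=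
  [exists S : {set Z6sq}, [&& S \subset X, #|S| == expZ6sq & \sum_(s in S) s == 0]].

Lemma has_zs6P X : reflect (has_zs6 X) (has_zs6b X).
Proof.
apply: (iffP existsP) => [[S /and3P [sSX /eqP cS /eqP sumS]]|[S [sSX [cS sumS]]]].
  by exists S.
by exists S; rewrite sSX cS sumS !eqxx.
Qed.

Lemma has_zs6_seq (X : {set Z6sq}) (T : seq Z6sq) :
  uniq T -> size T = 6%N -> {subset T <= X} -> \sum_(t <- T) t = 0 -> has_zs6 X.
Proof.
move=> uT szT subT sumT; exists [set t in T]; split; [|split].
- by apply/subsetP => t; rewrite inE; apply: subT.
- by rewrite cardsE; move/card_uniqP: uT => ->; rewrite szT.
- by rewrite (eq_bigl (mem T)) -?big_uniq // => t; rewrite inE.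
Qed.

Fixpoint no_long_extension (r : nat) (t : seq bitmap) (C : seq Z6sq) : bool :=
  if r is r'.+1 then
    let admissible := [seq w <- C | ~~ bit (nth empty_bm t 5) w] in
    all_branches (fun w C' => no_long_extension r' (add_elem t w) C') r admissible
  else false.

Section ZeroSumFree.

Variable X : {set Z6sq}.
Hypothesis X_free : ~ has_zs6 X.

Lemma not_completer Y w : uniq Y -> w \notin Y -> {subset w :: Y <= X} ->
  ~~ bit (nth empty_bm (completers 5 Y) 5) w.
Proof.
move=> uY wY sub; apply/negP => /completers_sound [T [sT szT sumT]].
apply: X_free; apply: (@has_zs6_seq X (w :: T)).
- rewrite /= (subseq_uniq sT uY) andbT.
  by apply: contra wY; apply: mem_subseq.
- by rewrite /= szT.
- move=> z; rewrite inE => /orP [/eqP ->|zT]; rewrite sub // inE ?eqxx //.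
  by rewrite (mem_subseq sT zT) orbT.
- by rewrite big_cons sumT subrr.
Qed.

Lemma no_long_extension_sound r Y C W :
  no_long_extension r (completers 5 Y) C -> uniq (Y ++ W) -> subseq W C ->
  {subset Y ++ W <= X} -> (size W < r)%N.
Proof.
elim: r Y C W => [|r IHr] Y C W //= search uYW sWC subX.
move: (uYW); rewrite cat_uniq => /and3P [uY disjYW _].
have sW_adm : subseq W [seq w <- C | ~~ bit (nth empty_bm (completers 5 Y) 5) w].
  rewrite subseq_filter sWC andbT; apply/allP => w wW.
  apply: not_completer => //; first by apply: contra disjYW => wY; apply/hasP; exists w.
  by move=> z; rewrite inE => /orP [/eqP ->|zY]; rewrite subX // mem_cat ?wW ?zY ?orbT.
rewrite ltnNge; apply/negP => rW.
have [w [C' [W' [defW searchW sWC']]]] := all_branchesP search sW_adm rW.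
have pe : perm_eq ((w :: Y) ++ W') (Y ++ W).
  by rewrite defW -[w :: Y]cat1s -catA perm_catCA; exact: perm_refl.
have subYW' : {subset (w :: Y) ++ W' <= X} by move=> z; rewrite (perm_mem pe) => /subX.
have := IHr (w :: Y) C' W' searchW; rewrite (perm_uniq pe) => /(_ uYW sWC' subYW') ltW'.
by move: rW; rewrite defW ltnS => /leq_ltn_trans/(_ ltW'); rewrite ltnn.
Qed.

End ZeroSumFree.

Definition elements : seq Z6sq := [seq (inZp i, inZp j) | i <- iota 0 6, j <- iota 0 6].

Lemma mem_elements x : x \in elements.
Proof. by case: x => [[[|[|[|[|[|[|a]]]]]] Ha] [[|[|[|[|[|[|b]]]]]] Hb]]. Qed.

Lemma elements_uniq : uniq elements.
Proof. by []. Qed.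

Lemma elements_zero : elements = 0 :: behead elements.
Proof. by apply/eqP. Qed.

Lemma search_Z6sq : no_long_extension 12 (completers 5 [:: 0]) (behead elements).
Proof. by vm_compute. Qed.

Lemma zero_sum_free_card (X : {set Z6sq}) : 0 \in X -> ~ has_zs6 X -> (#|X| <= 12)%N.
Proof.
move=> X0 X_free.
set W := [seq x <- behead elements | x \in X].
have defW0 : 0 :: W = [seq x <- elements | x \in X].
  rewrite [in RHS]elements_zero -[0 :: behead elements]cat1s filter_cat.
  by rewrite [filter _ [:: 0]]/= X0.
have uW0 : uniq (0 :: W) by rewrite defW0 filter_uniq ?elements_uniq.
have memW0 z : (z \in 0 :: W) = (z \in X) by rewrite defW0 mem_filter mem_elements andbT.
have subW0 : {subset [:: 0] ++ W <= X} by move=> z; rewrite cat1s memW0.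
have := no_long_extension_sound X_free search_Z6sq uW0 (filter_subseq _ _) subW0.
by rewrite -(eq_card memW0) (card_uniqP uW0).
Qed.

Lemma mulrn6 (x : Z6sq) : x *+ 6 = 0.
Proof.
have mulrn_pair n : x *+ n = (x.1 *+ n, x.2 *+ n).
  by elim: n => [|n IH] //; rewrite !mulrS IH.
have mulrn6_Z6 (c : 'Z_6) : c *+ 6 = 0 by apply: val_inj; rewrite Zp_mulrn /= modnMl.
by rewrite mulrn_pair !mulrn6_Z6.
Qed.

Lemma has_zs6_translate (X : {set Z6sq}) (a : Z6sq) :
  has_zs6 [set x + a | x : Z6sq in X] -> has_zs6 X.
Proof.
move=> [S [sSX [cS sumS]]]; exists [set y - a | y : Z6sq in S]; split; [|split].
- apply/subsetP => z /imsetP [y yS ->].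
  by have /imsetP [x xX ->] := subsetP sSX y yS; rewrite addrK.
- by rewrite card_imset //; apply: addIr.
- rewrite big_imset /=; last by move=> y z _ _; apply: addIr.
  by rewrite big_split /= sumS sumr_const cS add0r (mulrn6 (- a)).
Qed.

Lemma g_prop13 : g_prop 13.
Proof.
move=> X X13; have [a aX] : exists a : Z6sq, a \in X.
  by apply/set0Pn; rewrite -card_gt0 (leq_trans _ X13).
apply: (@has_zs6_translate X (- a)); apply/has_zs6P; apply: contraT => /has_zs6P free.
have X'0 : 0 \in [set x - a | x : Z6sq in X] by apply/imsetP; exists a; rewrite ?subrr.
have := zero_sum_free_card X'0 free; rewrite card_imset; last exact: addIr.
by rewrite leqNgt X13.
Qed.

Definition strip : seq Z6sq := [seq (inZp i, inZp j) | i <- iota 0 2, j <- iota 0 6].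

Lemma card_strip : #|[set x in strip]| = 12%N.
Proof. by rewrite cardsE; move/card_uniqP: (isT : uniq strip) => ->. Qed.

Lemma strip_completers : ~~ bit (nth empty_bm (completers 6 strip) 6) 0.
Proof. by vm_compute. Qed.

Lemma strip_free : ~ has_zs6 [set x in strip].
Proof.
move=> [S [sS [cS sumS]]].
set T := [seq x <- strip | x \in S].
have uT : uniq T by rewrite filter_uniq.
have memT : T =i S.
  by move=> z; rewrite mem_filter andb_idr // => /(subsetP sS); rewrite inE.
have szT : size T = 6%N by rewrite -(card_uniqP uT) (eq_card memT) cS.
have := @completers_complete 6 strip T (filter_subseq _ _).
rewrite szT big_uniq // (eq_bigl _ _ memT) sumS oppr0 => /(_ (leqnn 6)).
by rewrite (negbTE strip_completers).
Qed.

Local Close Scope ring_scope.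

Theorem theorem4p1 :
  (forall X : {set Z6sq}, #|X| = 13 -> has_zs6 X) /\ g_is 13.
Proof.
split; first by move=> X X13; apply: g_prop13; rewrite X13.
split => //; split; first exact: g_prop13.
move=> u u_gt0 g_u; rewrite leqNgt; apply/negP => u_small.
by apply: strip_free; apply: g_u; rewrite card_strip.
Qed.
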